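(* Let $A$ be a partially ordered set and $G,H,K$ games over $A$. Then: (a) if $G\lhd H$ and $H\le K$ then $G\lhd K$; (b) if $G\le H$ and $H\lhd K$ then $G\lhd K$; (c) if $G\le H$ and $H\le K$ then $G\le K$.
   Context: Games over a poset $A$ are defined inductively: for each $a\in A$ there is an atomic game $[a]$, which has no options; and if $L$ and $R$ are non-empty sets of games, then $\{L\mid R\}$ is a composite game with left options $L$ and right options $R$. The relations $\le$ and $\lhd$ are defined by simultaneous recursion: $G\le H$ iff (1) every left option $G^L$ of $G$ satisfies $G^L\lhd H$, (2) every right option $H^R$ of $H$ satisfies $G\lhd H^R$, and (3) if $G$ or $H$ is atomic then $G\lhd H$; and $G\lhd H$ iff (1) some right option $G^R$ of $G$ satisfies $G^R\le H$, or (2) some left option $H^L$ of $H$ satisfies $G\le H^L$, or (3) $G=[a]$, $H=[b]$ are atomic and $a\le b$. *)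

From mathcomp Require Import all_boot all_order.
Set Implicit Arguments. Unset Strict Implicit. Unset Printing Implicit Defensive.

Section Games.
Context {d : Order.disp_t} {A : porderType d}.

(* Games over a poset A.  A composite game {L | R} is given by two nonempty
   families of games L : I -> game and R : J -> game; the sets of left/right
   options are their ranges. *)
Inductive game : Type :=
| Atom : A -> game
| Comp : forall (I J : Type), inhabited I -> inhabited J ->
         (I -> game) -> (J -> game) -> game.

Definition is_atom (G : game) : Prop :=
  match G with Atom _ => True | Comp _ _ _ _ _ _ => False end.

(* gle_glf G H = (G <= H, G <| H), defined by simultaneous recursion
   (outer recursion on G, inner recursion on H). *)
Fixpoint gle_glf (G : game) : game -> Prop * Prop :=
  fix inner (H : game) : Prop * Prop :=
    let lf : Prop :=
      (match G with
       | Atom _ => False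
       | Comp _ _ _ _ _ R => exists j, fst (gle_glf (R j) H)
       end)
      \/
      (match H with
       | Atom _ => False
       | Comp _ _ _ _ L _ => exists i, fst (inner (L i))
       end)
      \/
      (match G, H with
       | Atom a, Atom b => (a <= b)%O
       | _, _ => False
       end) in
    let le : Prop :=
      (match G with
       | Atom _ => True
       | Comp _ _ _ _ L _ => forall i, snd (gle_glf (L i) H)
       end)
      /\
      (match H with
       | Atom _ => True
       | Comp _ _ _ _ _ R => forall j, snd (inner (R j))
       end)
      /\
      ((is_atom G \/ is_atom H) -> lf) in
    (le, lf).

Definition gle (G H : game) : Prop := fst (gle_glf G H).
Definition glf (G H : game) : Prop := snd (gle_glf G H).

End Games.
Arguments game {d} A.

From mathcomp Require Import all_boot all_order.
Set Implicit Arguments. Unset Strict Implicit.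
Import Order.POrderTheory.

(* Simultaneous induction on the triple (G, H, K): unfolding one move reduces
   each of the three claims to a claim for a triple in which exactly one game
   is replaced by one of its options.  The only case that does not unfold is
   an inequality [a] <| [b] between atoms; there we use that <= and <| are
   monotone in atoms with respect to the order of A, which is proved
   beforehand by induction on the remaining game. *)

Section GameOrder.
Context {d : Order.disp_t} {A : porderType d}.
Implicit Types G H K X : game A.

Definition left_option X G : Prop :=
  match G with Atom _ => False | Comp _ _ _ _ L _ => exists i, X = L i end.

Definition right_option X G : Prop :=
  match G with Atom _ => False | Comp _ _ _ _ _ R => exists j, X = R j end.

Definition is_option X G : Prop := left_option X G \/ right_option X G.

Definition atom_le G H : Prop :=
  match G, H with Atom a, Atom b => (a <= b)%O | _, _ => False end.

Lemma game_option_ind (P : game A -> Prop) :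
  (forall G, (forall X, is_option X G -> P X) -> P G) -> forall G, P G.
Proof.
move=> IH; elim=> [a|I J hI hJ L IHL R IHR]; apply: IH => X; first by case.
by case=> [[i ->]|[j ->]].
Qed.

Lemma atom_le_atoml G H : atom_le G H -> is_atom G.
Proof. by case: G. Qed.

Lemma atom_le_atomr G H : atom_le G H -> is_atom H.
Proof. by case: G; case: H. Qed.

Lemma atom_le_trans G H K : atom_le G H -> atom_le H K -> atom_le G K.
Proof. by case: G => // a; case: H => // b; case: K => // c; apply: le_trans. Qed.

Lemma atom_optionF G X : is_atom G -> is_option X G -> False.
Proof. by case: G => // a _ []. Qed.

Lemma glf_right_option G X H : right_option X G -> gle X H -> glf G H.
Proof.
by case: G => // I J hI hJ L R [j ->] leXH; case: H leXH; left; exists j.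
Qed.

Lemma glf_left_option G H X : left_option X H -> gle G X -> glf G H.
Proof.
by case: H => // I J hI hJ L R [i ->] leGX; case: G leGX; right; left; exists i.
Qed.

Lemma glf_atom_le G H : atom_le G H -> glf G H.
Proof. by case: G => // a; case: H => // b leab; right; right. Qed.

Lemma glf_inv G H : glf G H ->
  [\/ exists2 X, right_option X G & gle X H,
      exists2 X, left_option X H & gle G X
    | atom_le G H].
Proof.
case: G => [a|I J hI hJ L R]; case: H => [b|I' J' hI' hJ' L' R'];
  case=> [|[]] //; try (by constructor 3);
  try (by case=> j leRH; constructor 1; exists (R j) => //; exists j);
  by case=> i leGL; constructor 2; exists (L' i) => //; exists i.
Qed.

Lemma gle_left_option G H X : gle G H -> left_option X G -> glf X H.
Proof.
case: G => // I J hI hJ L R; case: H => [b|I' J' hI' hJ' L' R'] [leL _] [i ->].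
  all: exact: leL.
Qed.

Lemma gle_right_option G H X : gle G H -> right_option X H -> glf G X.
Proof.
case: H => // I J hI hJ L R; case: G => [a|I' J' hI' hJ' L' R'] [_ [leR _]] [j ->].
  all: exact: leR.
Qed.

Lemma gle_glf_atom G H : is_atom G \/ is_atom H -> gle G H -> glf G H.
Proof.
case: G => [a|? ? ? ? ? ?]; case: H => [b|? ? ? ? ? ?] atomGH [_ [_ lf]].
  all: exact: lf.
Qed.

Lemma gle_intro G H :
  (forall X, left_option X G -> glf X H) ->
  (forall X, right_option X H -> glf G X) ->
  (is_atom G \/ is_atom H -> glf G H) -> gle G H.
Proof.
case: G => [a|I J hI hJ L R]; case: H => [b|I' J' hI' hJ' L' R'] leL leR lf;
  do ![split] => //;
  try (move=> i; apply: leL; by exists i); move=> j; apply: leR; by exists j.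
Qed.

Lemma atom_le_glf_gle_trans G H :
  atom_le G H -> forall K, (glf H K -> glf G K) /\ (gle H K -> gle G K).
Proof.
move=> leGH; elim/game_option_ind=> K IHK.
have ltGK : glf H K -> glf G K.
  case/glf_inv=> [[X oX _]|[X oX leHX]|leHK].
  - by case: (atom_optionF (atom_le_atomr leGH) (or_intror oX)).
  - exact: glf_left_option oX ((IHK X (or_introl oX)).2 leHX).
  - exact/glf_atom_le/(atom_le_trans leGH).
split=> // leHK; apply: gle_intro.
- by move=> X oX; case: (atom_optionF (atom_le_atoml leGH) (or_introl oX)).
- move=> X oX; apply: (IHK X (or_intror oX)).1.
  exact: gle_right_option leHK oX.
- move=> _; apply/ltGK/(gle_glf_atom _ leHK).
  by left; apply: atom_le_atomr leGH.
Qed.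

Lemma glf_gle_atom_le_trans H K :
  atom_le H K -> forall G, (glf G H -> glf G K) /\ (gle G H -> gle G K).
Proof.
move=> leHK; elim/game_option_ind=> G IHG.
have ltGK : glf G H -> glf G K.
  case/glf_inv=> [[X oX leXH]|[X oX _]|leGH].
  - exact: glf_right_option oX ((IHG X (or_intror oX)).2 leXH).
  - by case: (atom_optionF (atom_le_atoml leHK) (or_introl oX)).
  - exact/glf_atom_le/(atom_le_trans leGH).
split=> // leGH; apply: gle_intro.
- move=> X oX; apply: (IHG X (or_introl oX)).1.
  exact: gle_left_option leGH oX.
- by move=> X oX; case: (atom_optionF (atom_le_atomr leHK) (or_intror oX)).
- move=> _; apply/ltGK/(gle_glf_atom _ leGH).
  by right; apply: atom_le_atoml leHK.
Qed.

Record trans_at G H K : Prop := TransAt {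
  glf_gle_trans : glf G H -> gle H K -> glf G K;
  gle_glf_trans : gle G H -> glf H K -> glf G K;
  gle_trans : gle G H -> gle H K -> gle G K }.

Section TransitivityStep.
Variables G H K : game A.
Hypothesis IHG : forall X, is_option X G -> forall H K, trans_at X H K.
Hypothesis IHH : forall X, is_option X H -> forall K, trans_at G X K.
Hypothesis IHK : forall X, is_option X K -> trans_at G H X.

Lemma glf_gle_trans_step : glf G H -> gle H K -> glf G K.
Proof.
move=> ltGH leHK; case/glf_inv: ltGH => [[X oX leXH]|[X oX leGX]|leGH].
- exact: glf_right_option oX (gle_trans (IHG (or_intror oX) H K) leXH leHK).
- exact: gle_glf_trans (IHH (or_introl oX) K) leGX (gle_left_option leHK oX).
- apply: (atom_le_glf_gle_trans leGH K).1; apply: gle_glf_atom leHK.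
  by left; apply: atom_le_atomr leGH.
Qed.

Lemma gle_glf_trans_step : gle G H -> glf H K -> glf G K.
Proof.
move=> leGH ltHK; case/glf_inv: ltHK => [[X oX leXK]|[X oX leHX]|leHK].
- exact: glf_gle_trans (IHH (or_intror oX) K) (gle_right_option leGH oX) leXK.
- exact: glf_left_option oX (gle_trans (IHK (or_introl oX)) leGH leHX).
- apply: (glf_gle_atom_le_trans leHK G).1; apply: gle_glf_atom leGH.
  by right; apply: atom_le_atoml leHK.
Qed.

Lemma gle_trans_step : gle G H -> gle H K -> gle G K.
Proof.
move=> leGH leHK; apply: gle_intro.
- move=> X oX; apply: glf_gle_trans (IHG (or_introl oX) H K) _ leHK.
  exact: gle_left_option leGH oX.
- move=> X oX; apply: gle_glf_trans (IHK (or_intror oX)) leGH _.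
  exact: gle_right_option leHK oX.
- case=> atom.
  + exact: glf_gle_trans_step (gle_glf_atom (or_introl atom) leGH) leHK.
  + exact: gle_glf_trans_step leGH (gle_glf_atom (or_intror atom) leHK).
Qed.

End TransitivityStep.

Lemma game_trans G H K : trans_at G H K.
Proof.
elim/game_option_ind: G H K => G IHG H K.
elim/game_option_ind: H K => H IHH K.
elim/game_option_ind: K => K IHK.
split; [exact: glf_gle_trans_step | exact: gle_glf_trans_step | exact: gle_trans_step].
Qed.

End GameOrder.

Theorem lemma4p6 (d : Order.disp_t) (A : porderType d) (G H K : game A) :
  (glf G H -> gle H K -> glf G K) /\
  (gle G H -> glf H K -> glf G K) /\
  (gle G H -> gle H K -> gle G K).
Proof. by case: (game_trans G H K). Qed.
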